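(* Let $X$ be a topological vector space over $\mathbb{K}$, let $M\subset X$, and let $\alpha\ge\aleph_0$ be a cardinal with $w(X)\le\alpha$. Then: (i) $M$ is pointwise $\alpha$-dense-lineable if and only if $M$ is $\alpha$-infinitely pointwise $\alpha$-dense-lineable; (ii) for every cardinal $\gamma<\alpha$, $M$ is $(\gamma,\alpha)$-dense-lineable if and only if $M$ is $\alpha$-infinitely $(\gamma,\alpha)$-dense-lineable.
   Context: The weight $w(X)$ is the smallest cardinality of a base for the topology of $X$. $M$ is $\gamma$-lineable if there is a linear subspace of dimension $\gamma$ contained in $M\cup\{0\}$. $M$ is pointwise $\alpha$-dense-lineable if for each $x\in M$ there is a dense linear subspace $Y$ of $X$ with $\dim(Y)=\alpha$ and $x\in Y\subset M\cup\{0\}$. $M$ is $\alpha$-infinitely pointwise $\alpha$-dense-lineable if for each $x\in M$ there is a family $\{Y_\kappa\}_{\kappa<\alpha}$ of dense $\alpha$-dimensional subspaces of $X$ with $x\in Y_\kappa\subset M\cup\{0\}$ for all $\kappa$ and $Y_{\kappa_1}\cap Y_{\kappa_2}=\mathrm{span}(x)$ for $\kappa_1\ne\kappa_2$. For $\gamma<\alpha$, $M$ is $(\gamma,\alpha)$-dense-lineable if $M$ is $\gamma$-lineable and for every $\gamma$-dimensional subspace $W\subset M\cup\{0\}$ there is a dense $\alpha$-dimensional subspace $Y$ of $X$ with $W\subset Y\subset M\cup\{0\}$. $M$ is $\alpha$-infinitely $(\gamma,\alpha)$-dense-lineable if $M$ is $\gamma$-lineable and for every $\gamma$-dimensional subspace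 $W\subset M\cup\{0\}$ there is a family $\{Y_\kappa\}_{\kappa<\alpha}$ of dense $\alpha$-dimensional subspaces of $X$ with $W\subset Y_\kappa\subset M\cup\{0\}$ for all $\kappa$ and $Y_{\kappa_1}\cap Y_{\kappa_2}=W$ for $\kappa_1\neq\kappa_2$. *)

From HB Require Import structures.
From mathcomp Require Import all_boot all_order all_algebra.
From mathcomp Require Import all_classical all_reals all_analysis.
From mathcomp Require Import complex.

Set Implicit Arguments.
Unset Strict Implicit.
Unset Printing Implicit Defensive.

Import Order.TTheory GRing.Theory Num.Theory.
Local Open Scope classical_set_scope.
Local Open Scope ring_scope.

Section LinearNotions.
Variables (K : numFieldType) (X : lmodType K).

Definition span (E : set X) : set X :=
  [set y | exists (s : seq X) (c : X -> K),
     (forall e, e \in s -> E e) /\ y = \sum_(e <- s) c e *: e].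

Definition lin_indep (E : set X) : Prop :=
  forall (s : seq X) (c : X -> K), uniq s -> (forall e, e \in s -> E e) ->
    \sum_(e <- s) c e *: e = 0 -> forall e, e \in s -> c e = 0.

Definition subspace (Y : set X) : Prop :=
  Y 0 /\ (forall y z, Y y -> Y z -> Y (y + z)) /\
  (forall (k : K) y, Y y -> Y (k *: y)).

Definition has_dim (Y : set X) {I : Type} (D : set I) : Prop :=
  exists E : set X, [/\ E `<=` Y, lin_indep E, span E = Y & (E #= D)%card].

Definition dim_subspace (Y : set X) {I : Type} (D : set I) : Prop :=
  subspace Y /\ has_dim Y D.
End LinearNotions.

(* Cardinals are represented by (the full set of) types. *)
Definition card_lt {I J : Type} (G : set I) (A : set J) : Prop :=
  (G #<= A)%card /\ ~ (A #<= G)%card.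

Section Lineability.
Variables (K : numFieldType) (X : topologicalLmodType K).

Definition weight_le {I : Type} (A : set I) : Prop :=
  exists B : set (set X), basis B /\ (B #<= A)%card.

Definition lineable (M : set X) {I : Type} (G : set I) : Prop :=
  exists W : set X, dim_subspace W G /\ W `<=` M `|` [set 0].

Definition pointwise_dense_lineable (M : set X) {I : Type} (A : set I) : Prop :=
  forall x, M x -> exists Y : set X,
    [/\ dense Y, dim_subspace Y A, Y x & Y `<=` M `|` [set 0]].

Definition inf_pointwise_dense_lineable (M : set X) {I : Type} (A : set I) : Prop :=
  forall x, M x -> exists Y : I -> set X,
    (forall k, A k -> [/\ dense (Y k), dim_subspace (Y k) A, Y k x &
                          Y k `<=` M `|` [set 0]]) /\
    (forall k1 k2, A k1 -> A k2 -> k1 <> k2 -> Y k1 `&` Y k2 = span [set x]).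

Definition dense_lineable2 (M : set X) {I J : Type} (G : set J) (A : set I) : Prop :=
  lineable M G /\
  forall W : set X, dim_subspace W G -> W `<=` M `|` [set 0] ->
    exists Y : set X, [/\ dense Y, dim_subspace Y A, W `<=` Y & Y `<=` M `|` [set 0]].

Definition inf_dense_lineable2 (M : set X) {I J : Type} (G : set J) (A : set I) : Prop :=
  lineable M G /\
  forall W : set X, dim_subspace W G -> W `<=` M `|` [set 0] ->
    exists Y : I -> set X,
      (forall k, A k -> [/\ dense (Y k), dim_subspace (Y k) A, W `<=` Y k &
                            Y k `<=` M `|` [set 0]]) /\
      (forall k1 k2, A k1 -> A k2 -> k1 <> k2 -> Y k1 `&` Y k2 = W).
End Lineability.

Definition theorem3p3_over (K : numFieldType) : Prop :=
  forall (X : topologicalLmodType K) (M : set X) (I : Type),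
    infinite_set [set: I] -> weight_le X [set: I] ->
    (pointwise_dense_lineable M [set: I] <-> inf_pointwise_dense_lineable M [set: I]) /\
    (forall (J : Type), card_lt [set: J] [set: I] ->
       (dense_lineable2 M [set: J] [set: I] <-> inf_dense_lineable2 M [set: J] [set: I])).

(* Let Y be a dense subspace of dimension alpha inside M ∪ {0} that contains the
   given subspace W (the line through x, resp. the gamma-dimensional W), and let
   B be a basis of W, so |B| < alpha.  Since w(X) <= alpha, the nonempty open
   sets contain a family (U_j)_{j < alpha} such that every nonempty open set
   contains some U_j.  Well-order alpha x alpha so that every proper initial
   segment has fewer than alpha elements (alpha * alpha = alpha), and choose by
   transfinite recursion v_(k,j) in U_j ∩ Y outside the span of B and of the
   previously chosen vectors: fewer than alpha vectors cannot span Y, and a line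
   through a point of U_j ∩ Y in a direction outside that span leaves the span
   inside U_j.  The subspaces Y_k = span (B ∪ {v_(k,j) | j < alpha}) are then
   dense and alpha-dimensional, and pairwise meet in W because
   B ∪ {v_(k,j) | k, j < alpha} is linearly independent. *)

From HB Require Import structures.
From mathcomp Require Import all_boot all_order all_algebra.
From mathcomp Require Import all_classical all_reals all_analysis.
From mathcomp Require Import complex wochoice.

Set Implicit Arguments.
Unset Strict Implicit.
Unset Printing Implicit Defensive.

Import Order.TTheory GRing.Theory Num.Theory.
Local Open Scope classical_set_scope.

Definition injects (T U : Type) : Prop := exists f : T -> U, injective f.

Lemma injects_refl T : injects T T.
Proof. by exists id. Qed.

Lemma injects_trans T U V : injects T U -> injects U V -> injects T V.
Proof. by move=> [f fi] [g gi]; exists (g \o f) => x y /gi /fi. Qed.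

Lemma injects_card_le T U (A : set T) (B : set U) :
  injects A B <-> (A #<= B)%card.
Proof.
split=> [[f fi]|/card_leP/injfunPex [f _ fi]].
  by apply/card_leP/injfunPex; exists f => // x y _ _; apply: fi.
by exists f => x y; apply: fi; rewrite in_setT.
Qed.

Lemma injects_setT T : injects T [set: T].
Proof.
by exists (fun t => SigSub (mem_set (I : [set: T] t))) => x y /(congr1 val).
Qed.

Lemma injects_val T (A : set T) : injects A T.
Proof. by exists val => x y /val_inj. Qed.

Lemma injects_subset T (A B : set T) : A `<=` B -> injects A B.
Proof.
move=> AB; exists (fun x : A => SigSub (mem_set (AB _ (set_mem (valP x))))).
by move=> x y /(congr1 val) /= /val_inj.
Qed.

Lemma injects_image T U (f : T -> U) (A : set T) : injects (f @` A) A.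
Proof.
have /choice [g gP] : forall y : f @` A, exists x : A, f (val x) = val y.
  by move=> [y /= /set_mem [x Ax fx]]; exists (SigSub (mem_set Ax)).
by exists g => y y' e; apply: val_inj; rewrite -gP -gP e.
Qed.

Lemma injects_natP T (A : set T) : injects nat A <-> infinite_set A.
Proof.
rewrite infiniteP -injects_card_le; split; apply: injects_trans.
  exact: injects_val.
exact: injects_setT.
Qed.

Lemma injects_bij T U : injects T U -> injects U T -> exists f : T -> U, bijective f.
Proof.
move=> TU UT.
have /card_bijP [f [g fK gK]] : ([set: T] #= [set: U])%card.
  apply: Cantor_Bernstein; apply/injects_card_le.
    by apply: injects_trans (injects_trans TU (injects_setT U)); apply: injects_val.
  by apply: injects_trans (injects_trans UT (injects_setT T)); apply: injects_val.
pose inT (t : T) : [set: T] := SigSub (mem_set (I : [set: T] t)).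
pose inU (u : U) : [set: U] := SigSub (mem_set (I : [set: U] u)).
exists (fun t => val (f (inT t))); exists (fun u => val (g (inU u))).
  move=> t; have -> : inU (val (f (inT t))) = f (inT t) by apply: val_inj.
  by rewrite fK.
move=> u; have -> : inT (val (g (inU u))) = g (inU u) by apply: val_inj.
by rewrite gK.
Qed.

Lemma injects_total T U : injects T U \/ injects U T.
Proof.
pose P (G : set (T * U)) :=
  (forall a b b', G (a, b) -> G (a, b') -> b = b') /\
  (forall a a' b, G (a, b) -> G (a', b) -> a = a').
have [G [[Gf Gi] Gmax]] : exists G, P G /\ forall G', G `<` G' -> ~ P G'.
  apply: Zorn_bigcup => F FP Ftot; split.
    move=> a b b' [G1 FG1 G1ab] [G2 FG2 G2ab'].
    have [G12|G21] := Ftot _ _ FG1 FG2.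
      exact: (proj1 (FP _ FG2)) (G12 _ G1ab) G2ab'.
    exact: (proj1 (FP _ FG1)) G1ab (G21 _ G2ab').
  move=> a a' b [G1 FG1 G1ab] [G2 FG2 G2ab'].
  have [G12|G21] := Ftot _ _ FG1 FG2.
    exact: (proj2 (FP _ FG2)) (G12 _ G1ab) G2ab'.
  exact: (proj2 (FP _ FG1)) G1ab (G21 _ G2ab').
(* A maximal partial injection is total or onto. *)
have [dom|/existsNP [a0 na0]] := pselect (forall a, exists b, G (a, b)).
  left; have [f hf] := choice dom; exists f => x y fxy.
  by apply: Gi (hf x) _; rewrite fxy.
have [rng|/existsNP [b0 nb0]] := pselect (forall b, exists a, G (a, b)).
  right; have [g hg] := choice rng; exists g => x y gxy.
  by apply: Gf (hg x) _; rewrite gxy.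
exfalso; apply: (Gmax (G `|` [set (a0, b0)])).
  split; first by move=> ?; left.
  by move=> /(_ (a0, b0) (or_intror erefl)) h; apply: na0; exists b0.
split.
  move=> a b b' [Gab|/= [ea eb]] [Gab'|/= [ea' eb']].
  - exact: Gf Gab Gab'.
  - by case: na0; exists b; rewrite -ea'.
  - by case: na0; exists b'; rewrite -ea.
  - by rewrite eb eb'.
move=> a a' b [Gab|/= [ea eb]] [Gab'|/= [ea' eb']].
- exact: Gi Gab Gab'.
- by case: nb0; exists a; rewrite -eb'.
- by case: nb0; exists a'; rewrite -eb.
- by rewrite ea ea'.
Qed.

Lemma injects_sum A A' B B' :
  injects A A' -> injects B B' -> injects (A + B) (A' + B').
Proof.
move=> [f fi] [g gi].
exists (fun x => match x with inl a => inl (f a) | inr b => inr (g b) end).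
by move=> [a|b] [a'|b'] //= [] => [/fi|/gi] ->.
Qed.

Lemma injects_prod A A' B B' :
  injects A A' -> injects B B' -> injects (A * B) (A' * B').
Proof.
move=> [f fi] [g gi]; exists (fun x => (f x.1, g x.2)).
by move=> [a b] [a' b'] /= [/fi -> /gi ->].
Qed.

Lemma injects_sum_prod A : injects nat A -> injects (A + A) (A * A).
Proof.
move=> [f fi].
exists (fun x => match x with inl a => (a, f 0%N) | inr a => (a, f 1%N) end).
by move=> [a|a] [a'|a'] //= [->] // /fi.
Qed.

Lemma injects_setU T (A B : set T) : injects (A `|` B) (A + B)%type.
Proof.
pose f (x : A `|` B) : (A + B)%type :=
  match pselect (A (val x)) with
  | left h => inl (SigSub (mem_set h))
  | right h => inr (SigSub (mem_set (match set_mem (valP x) with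
               | or_introl h' => False_ind _ (h h') | or_intror h' => h' end)))
  end.
exists f => x y; rewrite /f.
by case: pselect => hx; case: pselect => hy //= [] e; apply: val_inj.
Qed.

Lemma injects_setX T U (A : set T) (B : set U) : injects (A `*` B) (A * B)%type.
Proof.
pose f (x : A `*` B) : (A * B)%type :=
  (SigSub (mem_set (proj1 (set_mem (valP x)))),
   SigSub (mem_set (proj2 (set_mem (valP x))))).
exists f => x y [] e1 e2; apply: val_inj.
by case: x y e1 e2 => [[a b] ?] [[a' b'] ?] /= -> ->.
Qed.

Lemma injects_nat2 : injects (nat * nat) nat.
Proof.
apply: (injects_trans (injects_setT _)); apply: injects_trans (injects_val [set: nat]).
by apply/injects_card_le; have := card_nat2; rewrite card_eq_le => /andP[].
Qed.

Section Hessenberg.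
Variable T : Type.
Implicit Types G : set ((T * T) * T).

Definition graph_image G : set T := [set y | exists p, G (p, y)].

(* [G] is the graph of a bijection from [S * S] onto [S := graph_image G],
   with [S] infinite unless [G] is empty. *)
Definition pairing_graph G :=
  [/\ forall p y y', G (p, y) -> G (p, y') -> y = y',
      forall p p' y, G (p, y) -> G (p', y) -> p = p',
      forall a b, (exists y, G ((a, b), y)) <-> graph_image G a /\ graph_image G b &
      G = set0 \/ injects nat (graph_image G)].

Lemma graph_image_mono G G' : G `<=` G' -> graph_image G `<=` graph_image G'.
Proof. by move=> GG' y [p /GG' Gp]; exists p. Qed.

Lemma pairing_graph_injects G : pairing_graph G ->
  injects (graph_image G * graph_image G) (graph_image G).
Proof.
move=> [_ Gi Gd _]; set S := graph_image G.
have /choice [h hh] : forall p : S * S, exists y : S, G ((val p.1, val p.2), val y).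
  move=> [a b]; have [|y Gy] := proj2 (Gd (val a) (val b)).
    by split; apply: set_mem (valP _).
  have Sy : S y by exists (val a, val b).
  by exists (SigSub (mem_set Sy)).
exists h => p p' e; have := hh p'; rewrite -e => /(Gi _ _ _ (hh p)) [e1 e2].
by case: p p' e1 e2 {e} => [a b] [a' b'] /= /val_inj -> /val_inj ->.
Qed.

Lemma pairing_graph_bigcup (F : set (set ((T * T) * T))) :
  F `<=` pairing_graph -> total_on F subset -> pairing_graph (\bigcup_(G in F) G).
Proof.
move=> FP Ftot.
have in_larger G1 G2 q1 q2 : F G1 -> F G2 -> G1 q1 -> G2 q2 ->
    exists2 G, F G & G q1 /\ G q2.
  move=> FG1 FG2 G1q G2q; have [G12|G21] := Ftot _ _ FG1 FG2.
    by exists G2 => //; split => //; apply: G12.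
  by exists G1 => //; split => //; apply: G21.
split.
- move=> p y y' [G1 FG1 G1y] [G2 FG2 G2y'].
  have [G FG [Gy Gy']] := in_larger _ _ _ _ FG1 FG2 G1y G2y'.
  by case: (FP _ FG) => Gf _ _ _; apply: Gf Gy Gy'.
- move=> p p' y [G1 FG1 G1p] [G2 FG2 G2p'].
  have [G FG [Gp Gp']] := in_larger _ _ _ _ FG1 FG2 G1p G2p'.
  by case: (FP _ FG) => _ Gi _ _; apply: Gi Gp Gp'.
- move=> a b; split.
    move=> [y [G FG Gy]]; case: (FP _ FG) => _ _ Gd _.
    have [[p1 h1] [p2 h2]] := proj1 (Gd a b) (ex_intro _ y Gy).
    by split; [exists p1|exists p2]; exists G.
  move=> [[p1 [G1 FG1 G1a]] [p2 [G2 FG2 G2b]]].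
  have [G FG [Ga Gb]] := in_larger _ _ _ _ FG1 FG2 G1a G2b.
  case: (FP _ FG) => _ _ Gd _.
  have [y Gy] := proj2 (Gd a b) (conj (ex_intro _ _ Ga) (ex_intro _ _ Gb)).
  by exists y; exists G.
- have [[G [FG nG]]|nG] := pselect (exists G, F G /\ G !=set0).
    case: (FP _ FG) => _ _ _ [G0|natG]; first by case: nG => q; rewrite G0.
    right; apply: injects_trans natG (injects_subset _).
    by apply: graph_image_mono => q Gq; exists G.
  left; apply/seteqP; split => // q [G FG Gq].
  by apply: nG; exists G; split => //; exists q.
Qed.

Lemma pairing_graph_nat : injects nat T -> exists2 G, pairing_graph G & G !=set0.
Proof.
move=> [n0 n0i].
have [b0 [b0' b0K b0K']] : exists b : nat * nat -> nat, bijective b.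
  by apply: injects_bij; [exact: injects_nat2|exists (fun n => (n, 0%N)) => x y []].
pose G q := exists a b, q = ((n0 a, n0 b), n0 (b0 (a, b))).
have imG y : graph_image G y <-> range n0 y.
  split; first by move=> [p [a [b [_ ->]]]]; exists (b0 (a, b)).
  move=> [n _ <-]; exists (n0 (b0' n).1, n0 (b0' n).2).
  by exists (b0' n).1, (b0' n).2; rewrite -surjective_pairing b0K'.
exists G; last by exists ((n0 0, n0 0), n0 (b0 (0, 0)))%N; exists 0%N, 0%N.
split.
- by move=> p y y' [a [b [-> ->]]] [a' [b' [[/n0i -> /n0i ->] ->]]].
- move=> p p' y [a [b [-> ->]]] [a' [b' [-> /n0i /(can_inj b0K) [-> ->]]]] //.
- move=> a b; split.
    by move=> [y [a' [b' [[-> ->] _]]]]; split; apply/imG; apply: imageT.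
  move=> [/imG [a' _ <-] /imG [b' _ <-]].
  by exists (n0 (b0 (a', b'))); exists a', b'.
- right; exists (fun n => SigSub (mem_set (proj2 (imG _) (imageT n0 n)))).
  by move=> x y /(congr1 val) /n0i.
Qed.

Definition new_pairs (S S' : set T) : set (T * T) :=
  [set p | [/\ (S `|` S') p.1, (S `|` S') p.2 & ~ (S p.1 /\ S p.2)]].

Lemma new_pairs_bij (S S' : set T) : injects nat S -> injects (S * S) S ->
  injects S S' -> injects S' S -> (forall y, S' y -> ~ S y) ->
  exists beta : new_pairs S S' -> S', bijective beta.
Proof.
move=> natS SS SS' S'S disj; apply: injects_bij.
  have SUS : injects (S `|` S') S.
    apply: injects_trans (injects_setU _ _) _.
    apply: injects_trans (injects_sum (injects_refl _) S'S) _.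
    exact: injects_trans (injects_sum_prod natS) SS.
  apply: injects_trans (injects_subset (B := (S `|` S') `*` (S `|` S')) _) _.
    by move=> p [].
  apply: injects_trans (injects_setX _ _) _.
  exact: injects_trans (injects_prod SUS SUS) (injects_trans SS SS').
have diag (y : S') : new_pairs S S' (val y, val y).
  have S'y := set_mem (valP y).
  by split; [right|right|move=> [/(disj _ S'y)]].
by exists (fun y => SigSub (mem_set (diag y))) => x y /(congr1 val) [] /val_inj.
Qed.

Lemma pairing_graph_setU G (S' : set T) (beta : new_pairs (graph_image G) S' -> S') :
  pairing_graph G -> injects nat (graph_image G) ->
  (forall y, S' y -> ~ graph_image G y) -> bijective beta ->
  pairing_graph (G `|` [set q | exists r, val r = q.1 /\ val (beta r) = q.2]).
Proof.
move=> [Gf Gi Gd _] natS S'S [beta' betaK betaK'].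
set S := graph_image G in natS S'S Gd beta beta' betaK betaK' *.
set G' := G `|` _.
have beta_S' r : S' (val (beta r)) by apply: set_mem (valP _).
have imG' y : graph_image G' y <-> S y \/ S' y.
  split.
    by move=> [p [Gp|[r [_ /= <-]]]]; [left; exists p|right; apply: beta_S'].
  move=> [[p Gp]|S'y]; first by exists p; left.
  exists (val (beta' (SigSub (mem_set S'y)))); right.
  by exists (beta' (SigSub (mem_set S'y))); rewrite betaK'.
have not_new a b : S a -> S b -> ~ new_pairs S S' (a, b) by move=> Sa Sb [_ _]; apply.
split.
- move=> [a b] y y' [Gy|[r [/= rab <-]]] [Gy'|[r' [/= r'ab <-]]].
  + exact: Gf Gy Gy'.
  + have [Sa Sb] := proj1 (Gd a b) (ex_intro _ y Gy).
    by case: (not_new a b Sa Sb); rewrite -r'ab; apply: set_mem (valP r').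
  + have [Sa Sb] := proj1 (Gd a b) (ex_intro _ y' Gy').
    by case: (not_new a b Sa Sb); rewrite -rab; apply: set_mem (valP r).
  + by have -> : r = r' by apply: val_inj; exact: etrans rab (esym r'ab).
- move=> p p' y [Gy|[r [/= <- /= ry]]] [Gy'|[r' [/= <- /= r'y]]].
  + exact: Gi Gy Gy'.
  + by case: (S'S y); [rewrite -r'y; apply: beta_S'|exists p].
  + by case: (S'S y); [rewrite -ry; apply: beta_S'|exists p'].
  + by rewrite (can_inj betaK (val_inj (etrans ry (esym r'y)))).
- move=> a b; split.
    move=> [y [Gy|[r [/= rab _]]]].
      have [Sa Sb] := proj1 (Gd a b) (ex_intro _ y Gy).
      by split; apply/imG'; left.
    have [Ua Ub _] : new_pairs S S' (a, b) by rewrite -rab; apply: set_mem (valP r).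
    by split; apply/imG'.
  move=> [/imG' Ua /imG' Ub].
  have [Sab|nSab] := pselect (S a /\ S b).
    by have [y Gy] := proj2 (Gd a b) Sab; exists y; left.
  have new_ab : new_pairs S S' (a, b) by [].
  exists (val (beta (SigSub (mem_set new_ab)))); right.
  by exists (SigSub (mem_set new_ab)).
- by right; apply: injects_trans natS (injects_subset _) => y Sy; apply/imG'; left.
Qed.

Lemma pairing_graph_extend G : pairing_graph G -> G !=set0 ->
  injects (graph_image G) (~` graph_image G) -> exists2 G', pairing_graph G' & G `<` G'.
Proof.
move=> PG [[p0 y0] Gq0] [k ki]; set S := graph_image G in k ki *.
have natS : injects nat S by case: PG => _ _ _ [G0|//]; move: Gq0; rewrite G0.
pose k' (s : S) : T := val (k s).
have k'i : injective k' by move=> x y /val_inj /ki.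
have S'S y : range k' y -> ~ S y by move=> [s _ <-]; apply: (set_mem (valP (k s))).
have [beta beta_bij] : exists beta : new_pairs S (range k') -> range k', bijective beta.
  apply: new_pairs_bij => //; first exact: pairing_graph_injects.
    by exists (fun s => SigSub (mem_set (imageT k' s))) => x y /(congr1 val) /k'i.
  exact: injects_trans (injects_image k' _) (injects_val _).
have [beta' _ betaK'] := beta_bij.
eexists; first exact: pairing_graph_setU PG natS S'S beta_bij.
split => [q Gq|]; first by left.
pose s0 : S := SigSub (mem_set (ex_intro _ p0 Gq0 : S y0)).
pose r := beta' (SigSub (mem_set (imageT k' s0))).
move=> /(_ (val r, k' s0)) G'G.
have Gr : G (val r, k' s0) by apply: G'G; right; exists r; rewrite /r betaK'.
by apply: (S'S _ (imageT k' s0)); exists (val r).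
Qed.

Lemma injects_prod_self : injects nat T -> injects (T * T) T.
Proof.
move=> natT.
have [G [PG Gmax]] := Zorn_bigcup pairing_graph_bigcup.
have G0 : G !=set0.
  apply/set0P/eqP => G0; have [G' PG' [q G'q]] := pairing_graph_nat natT.
  by apply: (Gmax G') => //; rewrite G0; split => // /(_ q G'q).
set S := graph_image G.
have SS : injects (S * S) S := pairing_graph_injects PG.
have natS : injects nat S.
  by case: PG => _ _ _ [G0'|//]; case: G0 => q; rewrite G0'.
have SSS : injects (S + S) S := injects_trans (injects_sum_prod natS) SS.
have CS : injects (~` S) S.
  case: (injects_total S (~` S)) => // SC.
  by have [G' PG' GG'] := pairing_graph_extend PG G0 SC; case: (Gmax G').
have TS : injects T S.
  apply: injects_trans (injects_setT T) _.
  apply: injects_trans (injects_subset (B := S `|` ~` S) _) _ => [x _|].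
    exact: lem.
  apply: injects_trans (injects_setU _ _) _.
  exact: injects_trans (injects_sum (injects_refl _) CS) SSS.
exact: injects_trans (injects_prod TS TS) (injects_trans SS (injects_val _)).
Qed.

End Hessenberg.

Lemma injects_natT T : injects nat T <-> infinite_set [set: T].
Proof.
rewrite -injects_natP; split => natT; apply: injects_trans natT _.
  exact: injects_setT.
exact: injects_val.
Qed.

Lemma injects_sum_self T : injects nat T -> injects (T + T) T.
Proof.
by move=> natT; apply: injects_trans (injects_sum_prod natT) (injects_prod_self natT).
Qed.

Lemma card_setU_range T I (W : set T) (f : I -> T) : injects nat I -> injective f ->
  ~ injects I W -> (W `|` range f #= [set: I])%card.
Proof.
move=> natI fi IW; apply: Cantor_Bernstein; apply/injects_card_le.
  apply: injects_trans (injects_setU _ _) _.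
  have WI : injects W I by case: (injects_total I W).
  have fI : injects (range f) I := injects_trans (injects_image _ _) (injects_val _).
  apply: injects_trans (injects_sum WI fI) _.
  exact: injects_trans (injects_sum_self natI) (injects_setT I).
have Wf i : (W `|` range f) (f i) by right; exists i.
by exists (fun i => SigSub (mem_set (Wf (val i)))) => i j /(congr1 val) /fi /val_inj.
Qed.

Lemma injects_nat_sum A B : injects nat (A + B) -> injects nat A \/ injects nat B.
Proof.
rewrite !injects_natT => AB; apply: contrapT => /not_orP [/contrapT fA /contrapT fB].
apply: AB; have -> : [set: A + B] = (inl @` [set: A]) `|` (inr @` [set: B]).
  by apply/seteqP; split => // -[a|b] _; [left; exists a|right; exists b].
by rewrite finite_setU; split; apply: finite_image.
Qed.

Lemma not_injects_sum I A B : injects nat I ->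
  ~ injects I A -> ~ injects I B -> ~ injects I (A + B).
Proof.
move=> natI IA IB IAB; have natAB := injects_trans natI IAB.
have into C : injects A C -> injects B C -> injects nat C -> injects I C.
  move=> hA hB natC; apply: injects_trans IAB (injects_trans (injects_sum hA hB) _).
  exact: injects_sum_self.
case: (injects_total A B) => [AB|BA].
  apply/IB/(into _ AB (injects_refl _)).
  by case: (injects_nat_sum natAB) => // /injects_trans; apply.
apply/IA/(into _ (injects_refl _) BA).
by case: (injects_nat_sum natAB) => // /injects_trans; apply.
Qed.

Lemma not_injects_setU I T (A B : set T) : injects nat I ->
  ~ injects I A -> ~ injects I B -> ~ injects I (A `|` B).
Proof.
move=> natI IA IB /injects_trans /(_ (injects_setU A B)).
exact: not_injects_sum.
Qed.

Lemma not_injects_bigcup_seq I T (U : eqType) (S : set T) (F : T -> seq U) :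
  injects nat I -> ~ injects I S -> ~ injects I (\bigcup_(s in S) [set` F s]).
Proof.
move=> natI IS; set E := \bigcup_(s in S) _ => IE.
have [natS|finS] := pselect (injects nat S); last first.
  have /injects_natP := injects_trans natI IE; apply.
  apply: bigcup_finite => [|s _]; last exact: finite_seq.
  by apply: contrapT => /injects_natP.
apply: IS; apply: injects_trans IE _.
have /choice [g gP] : forall e : E, exists s : S, val e \in F (val s).
  by move=> [e /= /set_mem [s Ss Fs]]; exists (SigSub (mem_set Ss)).
have En : injects E (S * nat).
  exists (fun e => (g e, index (val e) (F (val (g e))))) => e e' [ge ie].
  apply: val_inj; have := nth_index (val e) (gP e); have := nth_index (val e) (gP e').
  by rewrite -ie -ge => -> ->.
apply: injects_trans En (injects_trans _ (injects_prod_self natS)).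
exact: injects_prod (injects_refl _) natS.
Qed.

Definition wellorder T (R : T -> T -> Prop) :=
  [/\ forall x y, R x y \/ R y x,
      forall x y, R x y -> R y x -> x = y,
      forall x y z, R x y -> R y z -> R x z &
      forall A : set T, A !=set0 -> exists2 m, A m & forall a, A a -> R m a].

Definition predecessors T (R : T -> T -> Prop) q : set T := [set x | R x q /\ x <> q].

Lemma wellorder_exists T : exists R : T -> T -> Prop, wellorder R.
Proof.
have [R Rwo] := well_ordering_principle {classic T}.
have minP (A : set T) : A !=set0 -> exists2 m, A m & forall a, A a -> R m a.
  move=> [x Ax]; have [|m [[mA mlb] _]] := Rwo [pred y : {classic T} | `[< A y >]].
    by exists x; rewrite inE.
  by exists m => [|a Aa]; [move: mA; rewrite inE|apply: mlb; rewrite inE].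
have Rtot x y : R x y \/ R y x.
  have [m xy mlb] := minP [set x; y] (ex_intro _ x (or_introl erefl)).
  by case: xy => <-; [left|right]; apply: mlb; [right|left].
have Rrefl x : R x x by case: (Rtot x x).
have Ranti x y : R x y -> R y x -> x = y.
  move=> xy yx; pose A := [pred w : {classic T} | (w == x) || (w == y)].
  have [|z [_ zuniq]] := Rwo A; first by exists x; rewrite inE eqxx.
  have minx : minimum_of R A x.
    by split; [rewrite inE eqxx|move=> w; rewrite inE => /orP [/eqP ->|/eqP ->]].
  have miny : minimum_of R A y.
    by split; [rewrite inE eqxx orbT|move=> w; rewrite inE => /orP [/eqP ->|/eqP ->]].
  by rewrite -(zuniq _ minx) -(zuniq _ miny).
exists R; split => // x y z xy yz.
have [m [[->|->]|->] mlb] :=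
  minP [set x; y; z] (ex_intro _ x (or_introl (or_introl erefl))).
- by apply: mlb; right.
- by rewrite (Ranti x y xy (mlb x _)) //; left; left.
- by rewrite -(Ranti y z yz (mlb y _)) //; left; right.
Qed.

Lemma wellorder_comp T U (R : U -> U -> Prop) (h : T -> U) : injective h ->
  wellorder R -> wellorder (fun x y => R (h x) (h y)).
Proof.
move=> hi [Rtot Ranti Rtr Rmin]; split.
- by move=> x y; apply: Rtot.
- by move=> x y xy yx; apply: hi; apply: Ranti.
- by move=> x y z; apply: Rtr.
move=> A [a Aa]; have [_ [m Am <-] mmin] := Rmin (h @` A) (ex_intro _ _ (imageP h Aa)).
by exists m => // b Ab; apply: mmin; apply: imageP.
Qed.

Lemma small_wellorder T :
  exists R : T -> T -> Prop, wellorder R /\ forall q, ~ injects T (predecessors R q).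
Proof.
have [R0 R0wo] := wellorder_exists T; have [_ R0anti _ R0min] := R0wo.
have [[m Tm]|small] := pselect (exists m, injects T (predecessors R0 m)); last first.
  by exists R0; split => // q Tq; apply: small; exists q.
(* Otherwise transport the order of the least initial segment as large as [T]. *)
have [m0 Tm0 m0min] := R0min [set m | injects T (predecessors R0 m)] (ex_intro _ m Tm).
have [g [g' gK _]] := injects_bij Tm0 (injects_val _).
have gi : injective (fun x => val (g x)) by move=> x y /val_inj /(can_inj gK).
pose R x y := R0 (val (g x)) (val (g y)).
exists R; split; first exact: wellorder_comp gi R0wo.
move=> q Tq; have [Rqm0 qm0] := set_mem (valP (g q)).
apply/qm0/(R0anti _ _ Rqm0)/m0min/(injects_trans Tq).
have pred_g (x : predecessors R q) : predecessors R0 (val (g q)) (val (g (val x))).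
  by have [Rxq xq] := set_mem (valP x); split => // /gi.
by exists (fun x => SigSub (mem_set (pred_g x))) => x y /(congr1 val) /gi /val_inj.
Qed.

Local Open Scope ring_scope.

Lemma sumr_count_mem (V : nmodType) (T : eqType) (s u : seq T) (F : T -> V) :
  uniq u -> {subset s <= u} ->
  \sum_(e <- s) F e = \sum_(e <- u) F e *+ count_mem e s.
Proof.
elim: s => [|x s IH] uu su.
  by rewrite big_nil; symmetry; apply: big1 => e _; rewrite mulr0n.
rewrite big_cons IH //; last by move=> e es; apply: su; rewrite inE es orbT.
under [RHS]eq_bigr => e _ do rewrite /= mulrnDr.
rewrite big_split /=; congr (_ + _).
rewrite (bigD1_seq x) ?su ?mem_head //= eqxx mulr1n big1 ?addr0 // => e /negbTE.
by rewrite eq_sym => ->; rewrite mulr0n.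
Qed.

Section LinearAlgebra.
Variables (K : numFieldType) (X : lmodType K).
Implicit Types (E A B C S : set X).

Lemma span_sum_uniq E y : span E y -> exists s (c : X -> K),
  (forall e, e \in s -> E e) /\ forall u, uniq u -> {subset s <= u} ->
  y = \sum_(e <- u) (c e *+ count_mem e s) *: e.
Proof.
move=> [s [c [sE ->]]]; exists s, c; split => // u uu su.
by rewrite (sumr_count_mem _ uu su); apply: eq_bigr => e _; rewrite scalerMnl.
Qed.

Lemma span0 E : span E 0.
Proof. by exists [::], (fun _ => 0); split => //; rewrite big_nil. Qed.

Lemma sub_span E : E `<=` span E.
Proof.
move=> e Ee; exists [:: e], (fun _ => 1); split.
  by move=> x; rewrite inE => /eqP ->.
by rewrite big_seq1 scale1r.
Qed.

Lemma spanD E y z : span E y -> span E z -> span E (y + z).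
Proof.
move=> /span_sum_uniq [s [c [sE hy]]] /span_sum_uniq [t [d [tE hz]]].
pose u := undup (s ++ t).
have uu : uniq u by apply: undup_uniq.
have su : {subset s <= u} by move=> e es; rewrite mem_undup mem_cat es.
have tu : {subset t <= u} by move=> e es; rewrite mem_undup mem_cat es orbT.
exists u, (fun e => c e *+ count_mem e s + d e *+ count_mem e t); split.
  by move=> e; rewrite mem_undup mem_cat => /orP [/sE|/tE].
rewrite (hy u uu su) (hz u uu tu) -big_split /=.
by apply: eq_bigr => e _; rewrite scalerDl.
Qed.

Lemma spanZ E (k : K) y : span E y -> span E (k *: y).
Proof.
move=> [s [c [sE ->]]]; exists s, (fun e => k * c e); split => //.
by rewrite scaler_sumr; apply: eq_bigr => e _; rewrite scalerA.
Qed.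

Lemma subspace_span E : subspace (span E).
Proof. by split; [exact: span0|split; [exact: spanD|exact: spanZ]]. Qed.

Lemma span_sub_subspace E (Z : set X) : subspace Z -> E `<=` Z -> span E `<=` Z.
Proof.
move=> [Z0 [ZD ZZ]] EZ y [s [c [sE ->]]].
elim: s sE => [|x s IH] sE; first by rewrite big_nil.
rewrite big_cons; apply: ZD; first by apply/ZZ/EZ/sE; rewrite inE eqxx.
by apply: IH => e es; apply: sE; rewrite inE es orbT.
Qed.

Lemma span_mono A B : A `<=` B -> span A `<=` span B.
Proof.
move=> AB; apply: span_sub_subspace; first exact: subspace_span.
by move=> e /AB; apply: sub_span.
Qed.

Lemma span_set0 : span set0 = [set 0 : X].
Proof.
apply/seteqP; split; last by move=> _ ->; apply: span0.
apply: span_sub_subspace => //; split => //; split => [y z -> ->|k y ->].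
  by rewrite addr0.
by rewrite scaler0.
Qed.

Lemma span_setD0 E : span (E `\ 0) = span E.
Proof.
apply/seteqP; split; first by apply: span_mono => e [].
apply: span_sub_subspace; first exact: subspace_span.
move=> e Ee; have [->|e0] := eqVneq e 0; first exact: span0.
by apply: sub_span; split => // /eqP; rewrite (negPf e0).
Qed.

Lemma lin_indepS A B : A `<=` B -> lin_indep B -> lin_indep A.
Proof. by move=> AB hB s c us sA; apply: hB => // e /sA /AB. Qed.

Lemma lin_indep0 : lin_indep (@set0 X).
Proof. by move=> [|a s] c _ sE //; case: (sE a); rewrite inE eqxx. Qed.

Lemma lin_indep_neq0 E : lin_indep E -> ~ E 0.
Proof.
move=> hE E0.
have s0 e : e \in [:: 0 : X] -> E e by rewrite inE => /eqP ->.
have := hE [:: 0] (fun _ => 1) isT s0; rewrite big_seq1 scaler0 => /(_ erefl 0).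
by rewrite inE eqxx => /(_ isT) /eqP; rewrite oner_eq0.
Qed.

Lemma span_setI C A B : lin_indep C -> A `<=` C -> B `<=` C ->
  span A `&` span B `<=` span (A `&` B).
Proof.
move=> hC AC BC y [/span_sum_uniq [s [c [sA hy]]] /span_sum_uniq [t [d [tB hz]]]].
pose u := undup (s ++ t).
have uu : uniq u by apply: undup_uniq.
have su : {subset s <= u} by move=> e es; rewrite mem_undup mem_cat es.
have tu : {subset t <= u} by move=> e es; rewrite mem_undup mem_cat es orbT.
have uC e : e \in u -> C e.
  by rewrite mem_undup mem_cat => /orP [/sA/AC|/tB/BC].
have cd e : e \in u -> c e *+ count_mem e s = d e *+ count_mem e t.
  move=> eu; apply/eqP; rewrite -subr_eq0; apply/eqP.
  apply: (hC u (fun e => c e *+ count_mem e s - d e *+ count_mem e t) uu uC _ e eu).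
  under eq_bigr do rewrite scalerBl.
  by rewrite sumrB -(hy u uu su) -(hz u uu tu) subrr.
exists [seq e <- u | (e \in s) && (e \in t)], (fun e => c e *+ count_mem e s); split.
  by move=> e; rewrite mem_filter => /andP [/andP [/sA ? /tB ?] _].
rewrite (hy u uu su) big_filter [RHS]big_mkcond; apply: eq_big_seq => e eu /=.
case: ifP => // /negbT; rewrite negb_and => /orP [es|et].
  by rewrite (count_memPn es) mulr0n scale0r.
by rewrite cd // (count_memPn et) mulr0n scale0r.
Qed.

Lemma lin_indepU1 C v : lin_indep C -> ~ span C v -> lin_indep (C `|` [set v]).
Proof.
move=> hC nv s c us sC.
have [vs|vs] := boolP (v \in s); last first.
  move=> s0; apply: hC => // e es.
  by case: (sC e es) => // ev; move: vs; rewrite -ev es.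
rewrite (bigD1_seq v) //= -big_filter; set w := [seq _ <- s | _].
have wC e : e \in w -> C e.
  by rewrite mem_filter => /andP [/eqP nev es]; case: (sC e es).
have uw : uniq w by apply: filter_uniq.
move=> s0; have cv : c v = 0.
  apply/eqP/negPn/negP => cv0; apply: nv.
  exists w, (fun e => - (c v)^-1 * c e); split => //.
  have ws : \sum_(e <- w) c e *: e = - (c v *: v).
    by apply/eqP; rewrite -addr_eq0 addrC s0.
  rewrite -[LHS]scale1r -(mulVf cv0) -scalerA.
  under eq_bigr do rewrite -scalerA.
  by rewrite -scaler_sumr ws scalerN scaleNr opprK.
move: s0; rewrite cv scale0r add0r => ws e es.
have [->|nev] := eqVneq e v; first by [].
by apply: (hC w c uw wC ws); rewrite mem_filter nev.
Qed.

Lemma lin_indep_set1D0 (x : X) : lin_indep ([set x] `\ 0).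
Proof.
have [->|x0] := eqVneq x 0.
  by apply: (lin_indepS _ lin_indep0) => _ [-> /(_ erefl)].
apply: (lin_indepS _ (lin_indepU1 lin_indep0 _)) => [y [-> _]|]; first by right.
by rewrite span_set0 => /eqP; apply/negP.
Qed.

Lemma lin_indep_notin_span E S e : lin_indep E -> S `<=` E -> E e -> ~ S e ->
  ~ span S e.
Proof.
move=> hE SE Ee nSe Se.
have : span ([set e] `&` S) e.
  apply: (span_setI hE _ SE) => [_ -> //|].
  by split => //; apply: sub_span.
have -> : [set e] `&` S = set0 by apply/seteqP; split => // _ [-> /nSe].
by rewrite span_set0 => e0; apply: (lin_indep_neq0 hE); rewrite -e0.
Qed.

Lemma lin_indep_chain (T : Type) (R : T -> T -> Prop) (D : set T) E (F : T -> set X) :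
  (forall x y, R x y \/ R y x) -> (forall x y, R x y -> F x `<=` F y) ->
  lin_indep E -> (forall t, D t -> lin_indep (E `|` F t)) ->
  lin_indep (E `|` \bigcup_(t in D) F t).
Proof.
move=> Rtot Fmono hE hF.
(* Every finite subset of the union lies in a single [E `|` F t]. *)
suff fin (s : seq X) : (forall e, e \in s -> (E `|` \bigcup_(t in D) F t) e) ->
    (forall e, e \in s -> E e) \/ exists2 t, D t & forall e, e \in s -> (E `|` F t) e.
  move=> s c us /fin [sE|[t Dt sF]]; [exact: hE s c us sE|exact: hF t Dt s c us sF].
elim: s => [|x s IH] sU; first by left.
have xs e : e \in x :: s -> e = x \/ e \in s.
  by rewrite inE => /orP [/eqP|]; [left|right].
case: (IH (fun e es => sU e (@mem_behead _ (x :: s) e es))) => [sE|[t Dt sF]];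
  case: (sU x (mem_head x s)) => [Ex|[t' Dt' F't'x]].
- by left => e /xs [->|/sE].
- by right; exists t' => // e /xs [->|/sE]; [right|left].
- by right; exists t => // e /xs [->|/sF]; [left|].
- case: (Rtot t t') => [tt'|t't]; right.
    exists t' => // e /xs [->|/sF [|/(Fmono _ _ tt')]]; by [right|left|right].
  by exists t => // e /xs [->|/sF //]; right; apply: Fmono t't _ F't'x.
Qed.

Lemma lin_indep_cover E S : lin_indep E -> S `<=` span E -> E `<=` span S ->
  exists F : X -> seq X, E `<=` \bigcup_(s in S) [set` F s].
Proof.
move=> hE SE ES.
have /choice [F FP] : forall s, exists l : seq X, S s ->
    (forall e, e \in l -> E e) /\ span [set` l] s.
  move=> s; have [/SE [l [c [lE ->]]]|] := pselect (S s); last by exists [::].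
  by exists l => _; split => //; exists l, c.
exists F; pose G := \bigcup_(s in S) [set` F s].
have GE : G `<=` E by move=> e [s Ss]; case: (FP s Ss) => + _; apply.
have SG : S `<=` span G.
  by move=> s Ss; case: (FP s Ss) => _; apply: span_mono => e Fe; exists s.
move=> e Ee; apply: contrapT => nGe; apply: (lin_indep_notin_span hE GE Ee nGe).
exact: span_sub_subspace (subspace_span G) SG _ (ES _ Ee).
Qed.

Lemma lin_indep_small_notin_span (I : Type) E S : injects nat I ->
  lin_indep E -> injects I E -> ~ injects I S -> S `<=` span E ->
  exists2 z, E z & ~ span S z.
Proof.
move=> natI hE IE IS SE; apply: contrapT => noz.
have ES : E `<=` span S by move=> e Ee; apply: contrapT => nSe; apply: noz; exists e.
have [F EF] := lin_indep_cover hE SE ES.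
exact: not_injects_bigcup_seq natI IS (injects_trans IE (injects_subset EF)).
Qed.

End LinearAlgebra.

Lemma wellorder_wf T (R : T -> T -> Prop) : wellorder R ->
  well_founded (fun x y => predecessors R y x).
Proof.
move=> [_ Ranti _ Rmin] x; apply: contrapT => nacc.
have [m nm mmin] :=
  Rmin [set y | ~ Acc (fun x y => predecessors R y x) y] (ex_intro _ x nacc).
apply: nm; constructor => y [ym neq]; apply: contrapT => ny.
by apply: neq; apply: Ranti ym (mmin _ ny).
Qed.

Section TransfiniteSelection.
Variables (K : numFieldType) (X : lmodType K) (D : Type) (R : D -> D -> Prop).
Variables (Y E : set X) (U : D -> set X).
Hypotheses (Rwo : wellorder R) (hE : lin_indep E).
Hypothesis step : forall d (A : set X), A `<=` Y -> injects A (predecessors R d) ->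
  exists v, [/\ U d v, Y v & ~ span (E `|` A) v].

Lemma lin_indep_transfinite : exists v : D -> X,
  [/\ injective v, forall d, U d (v d) /\ Y (v d) & lin_indep (E `|` range v)].
Proof.
have [Rtot _ Rtr _] := Rwo; have wf := wellorder_wf Rwo.
have /choice [next nextP] : forall dA : D * set X, exists v, dA.2 `<=` Y ->
    injects dA.2 (predecessors R dA.1) -> [/\ U dA.1 v, Y v & ~ span (E `|` dA.2) v].
  move=> [d A]; have [[AY IA]|] := pselect (A `<=` Y /\ injects A (predecessors R d)).
    by have [v vP] := step AY IA; exists v.
  by move=> nA; exists 0 => AY IA; case: nA.
pose F d (f : forall q, predecessors R d q -> X) :=
  next (d, [set x | exists q (p : predecessors R d q), f q p = x]).
pose v := Fix wf (fun _ => X) F.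
have vE d : v d = next (d, v @` predecessors R d).
  rewrite /v Fix_eq => [|x f g fg]; last first.
    by have -> : f = g by do 2 apply: functional_extensionality_dep => ?.
  congr next; congr pair; apply/seteqP.
  by split => [_ [q [p <-]]|_ [q p <-]]; [exists q|exists q, p].
have vP d : [/\ U d (v d), Y (v d) & ~ span (E `|` v @` predecessors R d) (v d)].
  elim/(well_founded_induction wf): d => d IH; rewrite [v d]vE; apply: (nextP (d, _)).
    by move=> _ [q qd <-]; case: (IH q qd).
  exact: injects_image.
have v_new d : ~ span (E `|` v @` predecessors R d) (v d) by case: (vP d).
pose Fv d := v @` [set q | R q d].
have Fmono x y : R x y -> Fv x `<=` Fv y.
  by move=> xy _ [q qx <-]; exists q => //; apply: Rtr qx xy.
have Rrefl d : R d d by case: (Rtot d d).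
have indep d : lin_indep (E `|` Fv d).
  elim/(well_founded_induction wf): d => d IH.
  have indep_pred : lin_indep (E `|` v @` predecessors R d).
    apply: (lin_indepS _ (lin_indep_chain Rtot Fmono hE IH)).
    by move=> x [Ex|[q qd <-]]; [left|right; exists q => //; exists q].
  apply: (lin_indepS _ (lin_indepU1 indep_pred (v_new d))).
  move=> x [Ex|[q qd <-]]; first by left; left.
  have [->|qd'] := pselect (q = d); first by right.
  by left; right; exists q.
exists v; split.
- move=> x y vxy; apply: contrapT => xy.
  have notin q q' : R q q' -> q <> q' -> v q <> v q'.
    move=> qq' nqq' vqq'; apply: (v_new q').
    by apply: sub_span; right; exists q; first by split.
  by case: (Rtot x y) => [/notin|/notin]; apply => // yx; apply: xy.
- by move=> d; case: (vP d).
apply: (lin_indepS _ (lin_indep_chain (D := setT) Rtot Fmono hE (fun d _ => indep d))).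
by move=> x [Ex|[d _ <-]]; [left|right; exists d => //; exists d].
Qed.

End TransfiniteSelection.

Section DenseSubspaces.
Variables (K : numFieldType) (X : topologicalLmodType K).

Lemma open_punctured_line (O : set X) y z : open O -> O y ->
  exists2 t : K, t != 0 & O (y + t *: z).
Proof.
move=> oO Oy.
have line_cont : {for (0 : K^o), continuous (fun t : K^o => y + t *: z)}.
  apply: (@continuous_comp K^o (X * X)%type X (fun t => (y, t *: z))
    (fun x => x.1 + x.2)); last exact: add_continuous.
  apply: (@cvg_pair _ _ _ (nbhs (0 : K^o))); first exact: cvg_cst.
  apply: (@continuous_comp K^o (K^o * X)%type X (fun t => (t, z))
    (fun x => x.1 *: x.2)); last exact: scale_continuous.
  exact: (@cvg_pair _ _ _ (nbhs (0 : K^o)) (nbhs (0 : K^o)) (nbhs z))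
    cvg_id (cvg_cst _).
have : nbhs (y + (0 : K^o) *: z) O.
  by rewrite scale0r addr0; apply: open_nbhs_nbhs.
move=> /line_cont /nbhs_ballP [e /= e0 he].
exists (e / 2); first by rewrite mulf_neq0 // ?gt_eqF.
apply: (he (e / 2)).
rewrite -ball_normE /ball_ /= sub0r normrN gtr0_norm ?divr_gt0 //.
by rewrite ltr_pdivrMr // ltr_pMr // ltr1n.
Qed.

Lemma open_dense_notin_span (Y O S : set X) z : dense Y -> subspace Y ->
  open O -> O !=set0 -> Y z -> ~ span S z -> exists v, [/\ O v, Y v & ~ span S v].
Proof.
move=> dY [_ [YD YZ]] oO O0 Yz nz.
have [y [Oy Yy]] := dY O O0 oO.
have [Sy|] := pselect (span S y); last by exists y.
have [t t0 Ot] := open_punctured_line z oO Oy.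
exists (y + t *: z); split => //; first by apply: YD => //; apply: YZ.
move=> Sv; apply: nz.
have -> : z = t^-1 *: ((y + t *: z) + (-1) *: y).
  by rewrite scaleN1r addrC addKr scalerA mulVf // scale1r.
by apply/spanZ/spanD => //; apply: spanZ.
Qed.

End DenseSubspaces.

Section DenseFamily.
Variables (K : numFieldType) (X : topologicalLmodType K) (I : Type).
Hypotheses (natI : injects nat I) (wI : weight_le X [set: I]).

Lemma weight_le_pi_base : exists U : I -> set X,
  (forall j, open (U j) /\ U j !=set0) /\
  forall O, open O -> O !=set0 -> exists j, U j `<=` O.
Proof.
have [B [[Bopen Bbase] BI]] := wI.
have [g gi] : injects B I :=
  injects_trans (proj2 (injects_card_le _ _) BI) (injects_val _).
have /choice [U UP] : forall j, exists U : set X, [/\ open U, U !=set0 &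
    forall V (BV : V \in B), V !=set0 -> g (SigSub BV) = j -> U = V].
  move=> j; have [[V [BV [V0 gV]]]|nV] :=
    pselect (exists V (BV : V \in B), V !=set0 /\ g (SigSub BV) = j).
    exists V; split => // [|V' BV' _ gV']; first exact/Bopen/set_mem.
    by have /(congr1 val) : SigSub BV = SigSub BV' :> B by apply: gi; rewrite gV gV'.
  exists setT; split => //; [exact: openT|by exists 0|].
  by move=> V BV V0 gV; case: nV; exists V, BV.
exists U; split => [j|O oO [x Ox]]; first by case: (UP j).
have /(Bbase x) [V [BV Vx] VO] : nbhs x O by apply: open_nbhs_nbhs.
exists (g (SigSub (mem_set BV))).
case: (UP (g (SigSub (mem_set BV)))) => _ _.
by move=> /(_ V (mem_set BV) (ex_intro _ x Vx) erefl) ->.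
Qed.

Lemma dense_notin_small_span (Y S O : set X) : dense Y -> dim_subspace Y [set: I] ->
  S `<=` Y -> ~ injects I S -> open O -> O !=set0 ->
  exists v, [/\ O v, Y v & ~ span S v].
Proof.
move=> dY [sY [EY [EYY iEY spY cEY]]] SY IS oO O0.
have IEY : injects I EY.
  apply: injects_trans (injects_setT I) _; apply/injects_card_le.
  by move: cEY; rewrite card_eq_le => /andP [].
have [|z /EYY Yz nz] := lin_indep_small_notin_span natI iEY IEY IS.
  by rewrite spY.
exact: open_dense_notin_span dY sY oO O0 Yz nz.
Qed.

Lemma dense_subspace_family (Y W : set X) :
  dense Y -> dim_subspace Y [set: I] -> W `<=` Y -> lin_indep W -> ~ injects I W ->
  exists Yk : I -> set X,
    (forall k, [/\ dense (Yk k), dim_subspace (Yk k) [set: I],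
                   span W `<=` Yk k & Yk k `<=` Y]) /\
    (forall k1 k2, k1 <> k2 -> Yk k1 `&` Yk k2 = span W).
Proof.
move=> dY dimY WY iW IW.
have [U [UP Ucover]] := weight_le_pi_base.
have [R [Rwo Rsmall]] := small_wellorder (I * I).
have step d (A : set X) : A `<=` Y -> injects A (predecessors R d) ->
    exists v, [/\ U d.2 v, Y v & ~ span (W `|` A) v].
  move=> AY Ad; have [Uo U0] := UP d.2.
  apply: dense_notin_small_span dY dimY _ _ Uo U0 => [x [/WY|/AY] //|].
  apply: not_injects_setU natI IW _ => /injects_trans /(_ Ad).
  by move=> /(injects_trans (injects_prod_self natI)); apply: Rsmall.
have [v [vi vP iv]] := lin_indep_transfinite Rwo iW step.
pose V k := range (fun j => v (k, j)).
have VW k : W `|` V k `<=` W `|` range v.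
  by move=> x [Wx|[j _ <-]]; [left|right; exists (k, j)].
exists (fun k => span (W `|` V k)); split => [k|k1 k2 k12].
  split.
  - move=> O O0 oO; have [j UO] := Ucover O oO O0.
    exists (v (k, j)); split; first by apply/UO; case: (vP (k, j)).
    by apply: sub_span; right; exists j.
  - split; first exact: subspace_span.
    exists (W `|` V k); split => //; [exact: sub_span|exact: lin_indepS (VW k) iv|].
    by apply: card_setU_range => // j j' /vi [].
  - by apply: span_mono; left.
  - apply: span_sub_subspace => [|x [/WY //|[j _ <-]]]; first by case: dimY.
    by case: (vP (k, j)).
apply/seteqP; split; last by move=> y Wy; split; apply: span_mono Wy => x; left.
apply: subset_trans (span_setI iv (VW k1) (VW k2)) (span_mono _).
by move=> x [[//|[j1 _ <-]] [//|[j2 _ /vi [] k21]]]; case: k12.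
Qed.

End DenseFamily.

Section Theorem33.
Variables (K : numFieldType) (X : topologicalLmodType K) (M : set X) (I : Type).
Hypotheses (infI : infinite_set [set: I]) (wI : weight_le X [set: I]).

Let natI : injects nat I. Proof. exact/injects_natT. Qed.

Let i0 : I. Proof. by case: (cid natI) => f _; exact: f 0%N. Qed.

Lemma pointwise_dense_lineableP :
  pointwise_dense_lineable M [set: I] <-> inf_pointwise_dense_lineable M [set: I].
Proof.
split=> [hM x Mx|hM x /hM [Yk [/(_ i0 Logic.I) [? ? ? ?] _]]]; last by exists (Yk i0).
have [Y [dY dimY Yx YM]] := hM x Mx.
have [||Yk [YkP Yk_int]] :=
  dense_subspace_family natI wI dY dimY _ (lin_indep_set1D0 (x := x)).
- by move=> _ [-> _].
- move=> /(injects_trans natI) /injects_natP [].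
  by apply: sub_finite_set (finite_set1 x) => y [].
exists Yk; split => [k _|k1 k2 _ _ k12]; last by rewrite Yk_int // span_setD0.
have [dk sk Wk kY] := YkP k; split => //; last exact: subset_trans kY YM.
by apply: Wk; rewrite span_setD0; apply: sub_span.
Qed.

Lemma dense_lineable2P (J : Type) : card_lt [set: J] [set: I] ->
  dense_lineable2 M [set: J] [set: I] <-> inf_dense_lineable2 M [set: J] [set: I].
Proof.
move=> [_ nIJ]; split => [[linM hM]|[linM hM]]; split => // W dimW WM; last first.
  by have [Yk [/(_ i0 Logic.I) [? ? ? ?] _]] := hM W dimW WM; exists (Yk i0).
have [Y [dY dimY WY YM]] := hM W dimW WM.
have [_ [EW [EWW iEW spW cEW]]] := dimW.
have IEW : ~ injects I EW.
  move=> IEW; apply: nIJ; apply/injects_card_le.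
  apply: injects_trans (injects_val _) (injects_trans IEW _); apply/injects_card_le.
  by move: cEW; rewrite card_eq_le => /andP [].
have [Yk [YkP Yk_int]] :=
  dense_subspace_family natI wI dY dimY (subset_trans EWW WY) iEW IEW.
exists Yk; split => [k _|k1 k2 _ _ k12]; last by rewrite Yk_int // spW.
have [dk sk Wk kY] := YkP k; split => //; last exact: subset_trans kY YM.
by rewrite -spW.
Qed.

End Theorem33.

Lemma theorem3p3_numField (K : numFieldType) : theorem3p3_over K.
Proof.
move=> X M I infI wI; split; first exact: pointwise_dense_lineableP.
by move=> J; apply: dense_lineable2P.
Qed.

Theorem theorem3p3 (R : realType) :
  theorem3p3_over R /\ theorem3p3_over (complex R).
Proof. by split; apply: theorem3p3_numField. Qed.
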